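(* Let $c>0$, $f_s>0$, let $M,N,K\ge1$ be integers, $T_{\max}=(N-1)/f_s$, $\bm{r}^{\mathrm{mic}}_1,\dots,\bm{r}^{\mathrm{mic}}_M\in\mathbb{R}^3$ with $E_M=\{\bm{r}^{\mathrm{mic}}_m\}$, $\bm{x}=(x_{m,n})\in\mathbb{R}^{MN}$. Let $\kappa$ be continuous with $\kappa(0)>0$ and $\lim_{|t|\to\infty}\kappa(t)=0$, and assume $\Gamma^K$ is amplitude lower-bounded. Then there exist an integer $K'\in\{0,\dots,K\}$, a pair $(\bm{a},\bm{r})\in\mathbb{R}_+^{K'}\times(\mathbb{R}^3\setminus E_M)^{K'}$ and $\widetilde{\bm{a}}\in\mathbb{R}_+^M$ such that, up to a permutation of the indices, $$\inf_{(\bm{a}',\bm{r}')\in\mathbb{R}_+^K\times\mathscr{C}^K}T(\bm{a}',\bm{r}')=\widetilde T(\bm{a},\bm{r},\widetilde{\bm{a}}):=\frac12\sum_{m=1}^M\sum_{n=0}^{N-1}\Big(x_{m,n}-\sum_{k=1}^{K'}a_k\gamma_{m,n}(\bm{r}_k)-\widetilde a_m\kappa(n/f_s)\Big)^2.$$ Moreover, there exists a minimizing sequence $(\bm{a}^l,\bm{r}^l)$ for this infimum such that $(a^l_k,\bm{r}^l_k)\to(a_k,\bm{r}_k)$ for all $k\in\{1,\dots,K'\}$ and $a^l_k\to0$ for $k\in\{K'+1,\dots,K\}$.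
   Context: $\mathbb{R}_+=[0,+\infty)$, $\|\cdot\|_2$ Euclidean norm. $T(\bm{a},\bm{r})=\frac12\|\bm{x}-\sum_{k=1}^K a_k\gamma(\bm{r}_k)\|_2^2$. For $\bm{r}\in\mathbb{R}^3\setminus E_M$, $\gamma_{m,n}(\bm{r})=\dfrac{\kappa\big(n/f_s-\|\bm{r}-\bm{r}^{\mathrm{mic}}_m\|_2/c\big)}{4\pi\|\bm{r}-\bm{r}^{\mathrm{mic}}_m\|_2}$, $1\le m\le M$, $0\le n\le N-1$. $\mathscr{C}=\bigcap_{m=1}^M\overline{B(\bm{r}^{\mathrm{mic}}_m,cT_{\max})}\setminus E_M$. $\Gamma^K(\bm{a},\bm{r})=\sum_k a_k\gamma(\bm{r}_k)$; it is amplitude lower-bounded if there is $C>0$ with $\|\Gamma^K(\bm{a},\bm{r})\|_2\ge C\sum_k a_k$ for all $(\bm{a},\bm{r})\in\mathbb{R}_+^K\times\mathscr{C}^K$. *)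

From HB Require Import structures.
From mathcomp Require Import all_boot all_order all_algebra.
From mathcomp Require Import fingroup perm.
From mathcomp Require Import all_classical all_reals all_analysis.
Set Implicit Arguments. Unset Strict Implicit. Unset Printing Implicit Defensive.
Import Order.TTheory GRing.Theory Num.Theory.
Import numFieldNormedType.Exports.
Local Open Scope ring_scope.
Local Open Scope classical_set_scope.

(* Euclidean norm of a row vector (the library norm on matrices is the max norm). *)
Definition enorm (R : realType) (d : nat) (v : 'rV[R]_d) : R :=
  Num.sqrt (\sum_(i < d) (v ord0 i) ^+ 2).

Definition Tmax (R : realType) (fs : R) (N : nat) : R := (N%:R - 1) / fs.

(* gamma_{m,n}(r) = kappa(n/f_s - ||r - r_m||/c) / (4 pi ||r - r_m||)
   (only meaningful for r not a microphone position). *)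
Definition gamma (R : realType) (c fs : R) (kappa : R -> R) (M : nat)
    (mic : 'I_M -> 'rV[R]_3) (r : 'rV[R]_3) (m : 'I_M) (n : nat) : R :=
  let d := enorm (r - mic m) in kappa (n%:R / fs - d / c) / (4 * pi * d).

Definition micset (R : realType) (M : nat) (mic : 'I_M -> 'rV[R]_3) : set 'rV[R]_3 :=
  [set r | exists m, r = mic m].

Definition regionC (R : realType) (c fs : R) (M N : nat)
    (mic : 'I_M -> 'rV[R]_3) : set 'rV[R]_3 :=
  [set r | (forall m : 'I_M, enorm (r - mic m) <= c * Tmax fs N) /\ ~ micset mic r].

Definition GammaK (R : realType) (c fs : R) (kappa : R -> R) (M K : nat)
    (mic : 'I_M -> 'rV[R]_3) (a : 'I_K -> R) (r : 'I_K -> 'rV[R]_3)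
    (m : 'I_M) (n : nat) : R :=
  \sum_(k < K) a k * gamma c fs kappa mic (r k) m n.

Definition costT (R : realType) (c fs : R) (kappa : R -> R) (M N K : nat)
    (mic : 'I_M -> 'rV[R]_3) (x : 'I_M -> 'I_N -> R)
    (a : 'I_K -> R) (r : 'I_K -> 'rV[R]_3) : R :=
  2^-1 * \sum_(m < M) \sum_(n < N) (x m n - GammaK c fs kappa mic a r m n) ^+ 2.

Definition costTt (R : realType) (c fs : R) (kappa : R -> R) (M N K' : nat)
    (mic : 'I_M -> 'rV[R]_3) (x : 'I_M -> 'I_N -> R)
    (a : 'I_K' -> R) (r : 'I_K' -> 'rV[R]_3) (at_ : 'I_M -> R) : R :=
  2^-1 * \sum_(m < M) \sum_(n < N)
    (x m n - GammaK c fs kappa mic a r m n - at_ m * kappa (n%:R / fs)) ^+ 2.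

Definition infT (R : realType) (c fs : R) (kappa : R -> R) (M N K : nat)
    (mic : 'I_M -> 'rV[R]_3) (x : 'I_M -> 'I_N -> R) : R :=
  inf [set t | exists (a : 'I_K -> R) (r : 'I_K -> 'rV[R]_3),
      (forall k, 0 <= a k) /\ (forall k, regionC c fs N mic (r k)) /\
      t = costT c fs kappa mic x a r].

Definition amplitude_lower_bounded (R : realType) (c fs : R) (kappa : R -> R)
    (M N K : nat) (mic : 'I_M -> 'rV[R]_3) : Prop :=
  exists C : R, 0 < C /\
    forall (a : 'I_K -> R) (r : 'I_K -> 'rV[R]_3),
      (forall k, 0 <= a k) -> (forall k, regionC c fs N mic (r k)) ->
      Num.sqrt (\sum_(m < M) \sum_(n < N) (GammaK c fs kappa mic a r m n) ^+ 2)
        >= C * \sum_(k < K) a k.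

From HB Require Import structures.
From mathcomp Require Import all_boot all_order all_algebra.
From mathcomp Require Import fingroup perm.
From mathcomp Require Import all_classical all_reals all_analysis.
From mathcomp Require Import lra ring.
Import Order.TTheory GRing.Theory Num.Theory.
Import numFieldNormedType.Exports.
Local Open Scope ring_scope.
Local Open Scope classical_set_scope.

(* A minimizing sequence (a^l, r^l) of T stays bounded: the amplitudes because
   Gamma^K is amplitude lower-bounded and ||Gamma^K|| is controlled by T, the
   positions because C is bounded, and also the ratios a^l_k / ||r^l_k - r^mic_m||,
   by looking at the sample n = 0, where kappa(-d/c) is close to kappa(0) > 0 for a
   source at small distance d from microphone m.  Written through these ratios and
   the distances, Gamma^K is continuous even where a distance vanishes, so along a
   convergent subsequence T tends to the cost of the limit configuration.  A source
   whose limit avoids the microphones keeps the amplitude ratio * distance; a source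
   converging to microphone m loses its amplitude, but its limit ratio survives as
   a term proportional to kappa(n/f_s) on channel m, which is the amplitude a~_m. *)

Lemma perm_pred_first (n : nat) (P : pred 'I_n) :
  exists s : {perm 'I_n}, forall i, P (s i) = (i < #|P|)%N.
Proof.
pose s := enum P ++ enum (predC P).
have size_s : size s = n by rewrite size_cat -!cardE cardC card_ord.
have uniq_s : uniq s.
  rewrite cat_uniq !enum_uniq /= andbT; apply/hasPn => x.
  by rewrite !mem_enum /= inE => ->.
pose f (i : 'I_n) := nth i s i.
have f_inj : injective f.
  move=> i j fij; have [ilt jlt] : (i < size s)%N /\ (j < size s)%N by rewrite size_s.
  apply/val_inj/eqP; rewrite -(nth_uniq i ilt jlt uniq_s).
  by move: fij; rewrite /f (set_nth_default j i ilt) => ->; rewrite (set_nth_default i j jlt).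
exists (perm f_inj) => i; rewrite permE /f nth_cat cardE.
case: ltnP => iP.
  by have := mem_nth i iP; rewrite mem_enum.
have : nth i (enum (predC P)) (i - size (enum P)) \in enum (predC P).
  by apply: mem_nth; rewrite ltn_subLR // -size_cat -/s size_s.
by rewrite mem_enum /= inE => /negbTE.
Qed.

Lemma sum_perm_pred_first {V : nmodType} {n : nat} (P : pred 'I_n)
    (s : {perm 'I_n}) (le_Pn : (#|P| <= n)%N) (F : 'I_n -> V) :
  (forall i, P (s i) = (i < #|P|)%N) ->
  \sum_(i | P i) F i = \sum_(i < #|P|) F (s (widen_ord le_Pn i)).
Proof.
move=> sP; rewrite (reindex_inj (@perm_inj _ s)) /=.
by rewrite (eq_bigl (fun i : 'I_n => (i < #|P|)%N)) ?(big_ord_narrow le_Pn).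
Qed.

Lemma increasing_seq_ge (f : nat -> nat) : increasing_seq f -> forall n, (n <= f n)%N.
Proof.
move=> /increasing_seqP f_incr; elim=> // n IHn.
exact: leq_ltn_trans IHn (f_incr n).
Qed.

Lemma increasing_seq_comp (f g : nat -> nat) :
  increasing_seq f -> increasing_seq g -> increasing_seq (f \o g).
Proof.
move=> f_incr /increasing_seqP g_incr; apply/increasing_seqP => n /=.
by have := g_incr n; rewrite !ltEnat /= -(leqW_mono f_incr).
Qed.

Lemma cvg_subseq {T : topologicalType} (u : nat -> T) (f : nat -> nat) (p : T) :
  increasing_seq f -> u @ \oo --> p -> (u \o f) @ \oo --> p.
Proof.
move=> f_incr; apply: cvg_comp => A [n _ nA]; exists n => // k /= nk.
exact/nA/(leq_trans nk)/increasing_seq_ge.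
Qed.

Lemma bolzano_weierstrass_fin {R : realType} {I : finType} (u : nat -> I -> R) (B : R) :
  (forall n i, `|u n i| <= B) ->
  exists2 f : nat -> nat, increasing_seq f &
    exists p : I -> R, forall i, u (f n) i @[n --> \oo] --> p i.
Proof.
move=> uB.
suff [f f_incr /(_ _ (mem_enum _ _)) f_cvg] : exists2 f : nat -> nat, increasing_seq f &
    forall i, i \in enum I -> cvgn (fun n => u (f n) i).
  have [p p_cvg] := choice (fun i => (cvg_ex _).1 (f_cvg i)).
  by exists f => //; exists p.
elim: (enum I) => [|j s [f f_incr f_cvg]]; first by exists id.
have bounded_j : bounded_fun (fun n => u (f n) j).
  exists B; split; first exact: num_real.
  by move=> b Bb n _; exact: le_trans (uB _ _) (ltW Bb).
have [g g_incr g_cvg] := bolzano_weierstrass bounded_j.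
exists (f \o g); first exact: increasing_seq_comp.
move=> i; rewrite in_cons => /orP[/eqP -> //|/f_cvg /cvg_ex[l fl]].
by apply/cvg_ex; exists l; exact: (cvg_subseq (fun n => u (f n) i)).
Qed.

Lemma cvg_sum_fin {R : numFieldType} {I : finType} {T : Type} {F : set_system T}
    {FF : Filter F} (f : I -> T -> R) (g : I -> R) :
  (forall i, f i x @[x --> F] --> g i) -> \sum_i f i x @[x --> F] --> \sum_i g i.
Proof. by move=> fg; apply: cvg_big => //; exact: add_continuous. Qed.

Lemma cvg_rV {R : realType} {n : nat} {T : Type} {F : set_system T} {FF : Filter F}
    (v : T -> 'rV[R]_n) (p : 'rV[R]_n) :
  (forall i, v x ord0 i @[x --> F] --> p ord0 i) -> v x @[x --> F] --> p.
Proof.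
move=> v_cvg; apply/cvg_mx_entourageP => A entA.
have near_ij (ij : 'I_1 * 'I_n) : \forall x \near F, (p ij.1 ij.2, v x ij.1 ij.2) \in A.
  case: ij => i j /=; rewrite (ord1 i).
  have /cvg_entourageP /(_ A entA) := v_cvg j.
  by rewrite near_map; apply: filterS => x; rewrite inE.
by apply: filterS (filter_forall _ near_ij) => x xA i j; exact: (xA (i, j)).
Qed.

Lemma ler_sum_term {R : numDomainType} {I : finType} (F : I -> R) i :
  (forall j, 0 <= F j) -> F i <= \sum_j F j.
Proof. by move=> F_ge0; rewrite (bigD1 i) //= lerDl sumr_ge0. Qed.

Lemma sum2_sqr_ge0 {R : realDomainType} {m n : nat} (F : 'I_m -> 'I_n -> R) :
  0 <= \sum_(i < m) \sum_(j < n) F i j ^+ 2.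
Proof. by rewrite sumr_ge0 // => i _; rewrite sumr_ge0 // => j _; exact: sqr_ge0. Qed.

Lemma ler_sum_term_lbound {R : realDomainType} {I : finType} (F : I -> R) (G L : R) i :
  0 <= L -> (forall j, - L <= F j) -> \sum_j F j <= G -> F i <= G + #|I|%:R * L.
Proof.
move=> L_ge0 FL; rewrite (bigD1 i) //= => sum_le.
have : - (#|I|%:R * L) <= \sum_(j | j != i) F j.
  apply: le_trans (ler_sum _ (fun j _ => FL j)).
  rewrite sumr_const mulNrn -[L *+ _]mulr_natl lerN2 ler_wpM2r // ler_nat.
  exact: max_card.
lra.
Qed.

Lemma weighted_sum_term_le_max {R : realFieldType} {I : finType} (e w : I -> R)
    (E L k0 G : R) :
  0 < k0 -> 0 <= E -> 0 <= L -> (forall j, 0 <= e j) ->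
  (forall j, (e j <= E /\ - L <= w j) \/ k0 <= w j) ->
  \sum_j e j * w j <= G ->
  forall i, e i <= Num.max E ((G + #|I|%:R * (E * L)) / k0).
Proof.
move=> k0_gt0 E_ge0 L_ge0 e_ge0 ew sum_le i.
have ew_ge j : - (E * L) <= e j * w j.
  by have := e_ge0 j; case: (ew j) => [[ejE wjL]|k0w] ej_ge0; nra.
have := ler_sum_term_lbound _ _ _ i (mulr_ge0 E_ge0 L_ge0) ew_ge sum_le.
rewrite le_max; case: (ew i) => [[-> //]|k0w] ew_le; apply/orP; right.
rewrite ler_pdivlMr //; apply: le_trans ew_le; rewrite ler_wpM2l //.
Qed.

Lemma enorm_ge0 {R : realType} {n : nat} (v : 'rV[R]_n) : 0 <= enorm v.
Proof. exact: sqrtr_ge0. Qed.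

Lemma enorm0 {R : realType} {n : nat} : enorm (0 : 'rV[R]_n) = 0.
Proof. by rewrite /enorm big1 ?sqrtr0 // => i _; rewrite mxE expr0n. Qed.

Lemma enorm_eq0 {R : realType} {n : nat} (v : 'rV[R]_n) : (enorm v == 0) = (v == 0).
Proof.
apply/idP/idP => [|/eqP ->]; last by rewrite enorm0.
rewrite /enorm sqrtr_eq0 => sum_le0.
have /eqP : \sum_(i < n) v ord0 i ^+ 2 = 0.
  by apply/eqP; rewrite eq_le sum_le0 sumr_ge0 // => i _; exact: sqr_ge0.
rewrite psumr_eq0 => [/allP v0|i _]; last exact: sqr_ge0.
apply/eqP/rowP => i; rewrite !mxE; apply/eqP; rewrite -sqrf_eq0.
exact: v0 i (mem_index_enum i).
Qed.

Lemma normr_entry_le_enorm {R : realType} {n : nat} (v : 'rV[R]_n) i :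
  `|v ord0 i| <= enorm v.
Proof.
rewrite /enorm -sqrtr_sqr ler_sqrt ?sumr_ge0 // => [|j _]; last exact: sqr_ge0.
by apply: (ler_sum_term (fun j => v ord0 j ^+ 2)) => j; exact: sqr_ge0.
Qed.

Lemma enorm_continuous {R : realType} {n : nat} : continuous (@enorm R n).
Proof.
have sum_cont : continuous (fun v : 'rV[R]_n => \sum_(i < n) v ord0 i ^+ 2).
  apply: continuous_big => [|i _ v]; first exact: add_continuous.
  by have := continuous_comp (@coord_continuous R 1 n ord0 i v) (@exprn_continuous R 2 _).
by move=> v; exact: (continuous_comp (sum_cont v) (@sqrt_continuous R _)).
Qed.

Section source_localization.
Context {R : realType} {c fs : R} {M N K : nat} {mic : 'I_M -> 'rV[R]_3}
  {xs : 'I_M -> 'I_N -> R} {kappa : R -> R} {r0 : 'rV[R]_3}.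
Hypotheses (c_gt0 : 0 < c) (fs_gt0 : 0 < fs) (M_gt0 : (0 < M)%N) (N_gt0 : (0 < N)%N)
  (kappa_cont : continuous kappa) (kappa0_gt0 : 0 < kappa 0)
  (alb : amplitude_lower_bounded c fs kappa N K mic) (r0C : regionC c fs N mic r0).

Local Notation reg := (regionC c fs N mic).
Local Notation cT := (costT c fs kappa mic xs).
Local Notation I := (infT c fs kappa K mic xs).
Local Notation dmic r m := (enorm (r - mic m)).
Local Notation Gmax :=
  (Num.sqrt (2 * \sum_(m < M) \sum_(n < N) xs m n ^+ 2 + 4 * (I + 1))).
Local Notation feasible_costs := [set t | exists (a : 'I_K -> R) (r : 'I_K -> 'rV[R]_3),
  (forall k, 0 <= a k) /\ (forall k, reg (r k)) /\ t = cT a r].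

Lemma dmic_gt0 r m : ~ micset mic r -> 0 < dmic r m.
Proof.
move=> rE; rewrite lt0r enorm_ge0 andbT enorm_eq0 subr_eq0.
by apply/eqP => rm; apply: rE; exists m.
Qed.

Lemma costT_ge0 (a : 'I_K -> R) (r : 'I_K -> 'rV[R]_3) : 0 <= cT a r.
Proof. by rewrite mulr_ge0 ?invr_ge0 ?ler0n // (sum2_sqr_ge0 (fun m n => _ - _)). Qed.

Lemma has_inf_feasible_costs : has_inf feasible_costs.
Proof.
split; first by exists (cT (fun _ : 'I_K => 0) (fun=> r0)), (fun=> 0), (fun=> r0).
by exists 0 => t [a [r [_ [_ ->]]]]; exact: costT_ge0.
Qed.

Lemma infT_ge0 : 0 <= I.
Proof.
apply: lb_le_inf; first exact: has_inf_feasible_costs.1.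
by move=> _ [a [r [_ [_ ->]]]]; exact: costT_ge0.
Qed.

Lemma minimizing_sequence : exists (al : nat -> 'I_K -> R) (rl : nat -> 'I_K -> 'rV[R]_3),
  (forall l k, 0 <= al l k) /\ (forall l k, reg (rl l k)) /\
  (forall l, cT (al l) (rl l) <= I + 1) /\ cT (al l) (rl l) @[l --> \oo] --> I.
Proof.
have inf_le : lbound feasible_costs I := ge_inf has_inf_feasible_costs.2.
have near_inf l : exists p : ('I_K -> R) * ('I_K -> 'rV[R]_3),
    [/\ forall k, 0 <= p.1 k, forall k, reg (p.2 k) & cT p.1 p.2 < I + l.+1%:R^-1].
  have [_ [a [r [a_ge0 [rC ->]]]] lt] := inf_adherent (harmonic_gt0 l) has_inf_feasible_costs.
  by exists (a, r).
have [p pP] := choice near_inf.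
have I_le l : I <= cT (p l).1 (p l).2.
  by apply: inf_le; exists (p l).1, (p l).2; have [? ? _] := pP l.
have le_I l : cT (p l).1 (p l).2 <= I + l.+1%:R^-1 by have [_ _ /ltW] := pP l.
exists (fun l => (p l).1), (fun l => (p l).2); split; first by move=> l; case: (pP l).
split; first by move=> l; case: (pP l).
split; first by move=> l; rewrite (le_trans (le_I l)) // lerD2l invf_le1 ?ler1n.
apply: (@squeeze_cvgr _ _ _ _ (fun=> I) (fun l => I + l.+1%:R^-1)).
- by near=> l; rewrite I_le le_I.
- exact: cvg_cst.
- by rewrite -[X in _ --> X]addr0; apply: cvgD; [exact: cvg_cst | exact: cvg_harmonic].
Unshelve. all: by end_near.
Qed.

Lemma sum_sqr_GammaK_le (a : 'I_K -> R) (r : 'I_K -> 'rV[R]_3) :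
  \sum_(m < M) \sum_(n < N) GammaK c fs kappa mic a r m n ^+ 2 <=
  2 * \sum_(m < M) \sum_(n < N) xs m n ^+ 2 + 4 * cT a r.
Proof.
rewrite /costT mulrA (_ : 4 * 2^-1 = 2 :> R); last by field.
rewrite !mulr_sumr -big_split /=; apply: ler_sum => m _.
rewrite !mulr_sumr -big_split /=; apply: ler_sum => n _.
have := sqr_ge0 (2 * xs m n - GammaK c fs kappa mic a r m n); nra.
Qed.

Lemma sqrt_sum_sqr_GammaK_le (a : 'I_K -> R) (r : 'I_K -> 'rV[R]_3) : cT a r <= I + 1 ->
  Num.sqrt (\sum_(m < M) \sum_(n < N) GammaK c fs kappa mic a r m n ^+ 2) <= Gmax.
Proof.
move=> cT_le; have := sum_sqr_GammaK_le a r; have := sum2_sqr_ge0 xs.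
have := infT_ge0 => I_ge0 x_ge0 Gamma_le; rewrite ler_sqrt; lra.
Qed.

Lemma GammaK_le_Gmax (a : 'I_K -> R) (r : 'I_K -> 'rV[R]_3) m (n : 'I_N) :
  cT a r <= I + 1 -> GammaK c fs kappa mic a r m n <= Gmax.
Proof.
move=> cT_le; apply: (le_trans _ (sqrt_sum_sqr_GammaK_le _ _ cT_le)).
rewrite (le_trans (ler_norm _)) // -sqrtr_sqr ler_sqrt ?(sum2_sqr_ge0 (GammaK _ _ _ _ a r)) //.
apply: le_trans (ler_sum_term (fun m => \sum_(n < N) _ ^+ 2) m _) => [|m'].
  by apply: (ler_sum_term (fun n : 'I_N => _ ^+ 2)) => n'; exact: sqr_ge0.
by rewrite sumr_ge0 // => n' _; exact: sqr_ge0.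
Qed.

Lemma amplitude_bound : exists2 A, 0 <= A & forall (a : 'I_K -> R) (r : 'I_K -> 'rV[R]_3),
  (forall k, 0 <= a k) -> (forall k, reg (r k)) -> cT a r <= I + 1 -> forall k, a k <= A.
Proof.
have [C [C_gt0 CG]] := alb.
exists (Gmax / C) => [|a r a_ge0 rC cT_le k]; first by rewrite divr_ge0 ?sqrtr_ge0 ?ltW.
rewrite ler_pdivlMr // mulrC; apply: (le_trans _ (sqrt_sum_sqr_GammaK_le _ _ cT_le)).
by apply: (le_trans _ (CG a r a_ge0 rC)); rewrite ler_pM2l //; exact: ler_sum_term.
Qed.

Lemma position_bound : exists B, forall r, reg r -> forall i, `|r ord0 i| <= B.
Proof.
pose m0 : 'I_M := Ordinal M_gt0.
exists (c * Tmax fs N + enorm (mic m0)) => r [rB _] i.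
rewrite -[r ord0 i](subrK (mic m0 ord0 i)); apply: le_trans (ler_normD _ _) _.
apply: lerD; last exact: normr_entry_le_enorm.
by have := normr_entry_le_enorm (r - mic m0) i; rewrite !mxE => /le_trans; apply.
Qed.

Lemma kappa_gt_half_near0 : exists2 de, 0 < de & forall t, `|t| < de -> kappa 0 / 2 < kappa t.
Proof.
have half_lt : kappa 0 / 2 < kappa 0 by rewrite ltr_pdivrMr // ltr_pMr // ltr1n.
have [de de_gt0 deP] := (nbhs_ballP _ _).1 (cvgr_gt _ (kappa_cont 0) _ half_lt).
by exists de => // t t_lt; apply: deP; rewrite /ball /= sub0r normrN.
Qed.

Lemma kappa_lbound : exists2 L, 0 <= L & forall t, - Tmax fs N <= t <= 0 -> - L <= kappa t.
Proof.
have Tmax_ge0 : 0 <= Tmax fs N by rewrite divr_ge0 ?subr_ge0 ?ler1n ?ltW.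
have [t0 _ t0_min] : exists2 t0, t0 \in `[- Tmax fs N, 0]%R &
    forall t, t \in `[- Tmax fs N, 0]%R -> kappa t0 <= kappa t.
  by apply: EVT_min; [rewrite oppr_le0 | exact: continuous_subspaceT].
exists `|kappa t0| => // t t_itv; rewrite (le_trans _ (t0_min t _)) ?in_itv //.
by rewrite lerNl -normrN ler_norm.
Qed.

Definition GammaE (e d : 'I_K -> 'I_M -> R) (m : 'I_M) (n : nat) : R :=
  \sum_(k < K) e k m * (kappa (n%:R / fs - d k m / c) / (4 * pi)).

Definition costE (e d : 'I_K -> 'I_M -> R) : R :=
  2^-1 * \sum_(m < M) \sum_(n < N) (xs m n - GammaE e d m n) ^+ 2.

Lemma GammaK_ratioE (a : 'I_K -> R) (r : 'I_K -> 'rV[R]_3) m n :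
  GammaK c fs kappa mic a r m n =
  GammaE (fun k m => a k / dmic (r k) m) (fun k m => dmic (r k) m) m n.
Proof.
apply: eq_bigr => k _; rewrite /gamma /=.
by move: (dmic (r k) m) (4 * pi) => d q; rewrite invfM; ring.
Qed.

Lemma costT_ratioE (a : 'I_K -> R) (r : 'I_K -> 'rV[R]_3) :
  cT a r = costE (fun k m => a k / dmic (r k) m) (fun k m => dmic (r k) m).
Proof.
congr (_ * _); apply: eq_bigr => m _; apply: eq_bigr => n _.
by rewrite GammaK_ratioE.
Qed.

Lemma ratio_bound : exists E, forall (a : 'I_K -> R) (r : 'I_K -> 'rV[R]_3),
  (forall k, 0 <= a k) -> (forall k, reg (r k)) -> cT a r <= I + 1 ->
  forall k m, a k / dmic (r k) m <= E.
Proof.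
have [A A_ge0 aA] := amplitude_bound.
have [de de_gt0 kappa_de] := kappa_gt_half_near0.
have [L L_ge0 kappa_L] := kappa_lbound.
have pi4_gt0 : 0 < 4 * pi :> R by rewrite mulr_gt0 ?pi_gt0.
pose E1 := A / (c * de); pose k0 := kappa 0 / 2 / (4 * pi).
exists (Num.max E1 ((Gmax + K%:R * (E1 * (L / (4 * pi)))) / k0)).
move=> a r a_ge0 rC cT_le k m.
(* At the sample n = 0, a source closer than c * de to microphone m has weight
   above k0; any other source has ratio at most E1 and weight at least -L/(4 pi). *)
have d_gt0 j : 0 < dmic (r j) m by exact: dmic_gt0 (rC j).2.
have := @weighted_sum_term_le_max _ _ (fun j => a j / dmic (r j) m)
  (fun j => kappa (0%:R / fs - dmic (r j) m / c) / (4 * pi)) E1 (L / (4 * pi)) k0 Gmax.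
rewrite card_ord; apply.
- by rewrite !divr_gt0.
- by rewrite divr_ge0 // mulr_ge0 // ltW.
- by rewrite divr_ge0 // ltW.
- by move=> j; rewrite divr_ge0 // ltW.
- move=> j; case: (ltP (dmic (r j) m) (c * de)) => dj; [right | left; split].
  + rewrite ler_pM2r ?invr_gt0 //; apply/ltW/kappa_de.
    by rewrite mul0r sub0r normrN ger0_norm ?divr_ge0 ?enorm_ge0 ?ltW // ltr_pdivrMr // mulrC.
  + apply: (le_trans (y := A / dmic (r j) m)).
      by apply: ler_wpM2r; [rewrite invr_ge0 ltW | exact: aA].
    by apply: ler_wpM2l => //; rewrite lef_pV2 ?posrE ?mulr_gt0.
  + rewrite -mulNr ler_pM2r ?invr_gt0 //; apply: kappa_L.
    rewrite mul0r sub0r; apply/andP; split; last by rewrite oppr_le0 divr_ge0 ?enorm_ge0 ?ltW.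
    by rewrite lerN2 ler_pdivrMr // mulrC; exact: (rC j).1.
- by have := GammaK_le_Gmax _ _ m (Ordinal N_gt0) cT_le; rewrite GammaK_ratioE.
Qed.

Lemma cvg_costE {T : Type} {F : set_system T} {FF : Filter F}
    (e d : T -> 'I_K -> 'I_M -> R) (e0 d0 : 'I_K -> 'I_M -> R) :
  (forall k m, e x k m @[x --> F] --> e0 k m) ->
  (forall k m, d x k m @[x --> F] --> d0 k m) ->
  costE (e x) (d x) @[x --> F] --> costE e0 d0.
Proof.
move=> e_cvg d_cvg.
have Gamma_cvg m n : GammaE (e x) (d x) m n @[x --> F] --> GammaE e0 d0 m n.
  apply: cvg_sum_fin => k; apply: cvgM; first exact: e_cvg.
  apply: cvgM; last exact: cvg_cst.
  apply: (continuous_cvg _ (kappa_cont _)).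
  by apply: cvgB; [exact: cvg_cst | apply: cvgM; [exact: d_cvg | exact: cvg_cst]].
apply: cvgM; first exact: cvg_cst.
apply: cvg_sum_fin => m; apply: cvg_sum_fin => n.
rewrite expr2; under eq_cvg do rewrite expr2.
by apply: cvgM; apply: cvgB; [exact: cvg_cst | exact: Gamma_cvg | exact: cvg_cst | exact: Gamma_cvg].
Qed.

Lemma convergent_minimizing_sequence :
  exists (al : nat -> 'I_K -> R) (rl : nat -> 'I_K -> 'rV[R]_3)
         (alpha : 'I_K -> R) (rho : 'I_K -> 'rV[R]_3) (eps : 'I_K -> 'I_M -> R),
    (forall l k, 0 <= al l k) /\ (forall l k, reg (rl l k)) /\
    cT (al l) (rl l) @[l --> \oo] --> I /\
    (forall k, al l k @[l --> \oo] --> alpha k) /\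
    (forall k, rl l k @[l --> \oo] --> rho k) /\
    (forall k m, al l k / dmic (rl l k) m @[l --> \oo] --> eps k m).
Proof.
have [al [rl [al_ge0 [rlC [cT_le cT_cvg]]]]] := minimizing_sequence.
have [A _ aA] := amplitude_bound.
have [E aE] := ratio_bound.
have [B rB] := position_bound.
pose u l (t : 'I_K + 'I_K * 'I_3 + 'I_K * 'I_M) : R :=
  match t with
  | inl (inl k) => al l k
  | inl (inr (k, i)) => rl l k ord0 i
  | inr (k, m) => al l k / dmic (rl l k) m
  end.
have uB l t : `|u l t| <= Num.max A (Num.max E B).
  have [a_le e_le] := (aA _ _ (al_ge0 l) (rlC l) (cT_le l), aE _ _ (al_ge0 l) (rlC l) (cT_le l)).
  rewrite !le_max; case: t => [[k|[k i]]|[k m]] /=.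
  - by rewrite ger0_norm ?a_le.
  - by rewrite rB ?orbT.
  - by rewrite ger0_norm ?e_le ?orbT // divr_ge0 ?enorm_ge0.
have [f f_incr [p p_cvg]] := bolzano_weierstrass_fin _ _ uB.
exists (al \o f), (rl \o f), (fun k => p (inl (inl k))),
  (fun k => \row_i p (inl (inr (k, i)))), (fun k m => p (inr (k, m))).
split; first by move=> l; exact: al_ge0.
split; first by move=> l; exact: rlC.
split; first exact: (cvg_subseq _ _ _ f_incr cT_cvg).
split; first by move=> k; exact: p_cvg (inl (inl k)).
split; last by move=> k m; exact: p_cvg (inr (k, m)).
by move=> k; apply: cvg_rV => i; rewrite mxE; exact: p_cvg (inl (inr (k, i))).
Qed.

Lemma minimizing_sequence_limits :
  exists (al : nat -> 'I_K -> R) (rl : nat -> 'I_K -> 'rV[R]_3)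
         (alpha : 'I_K -> R) (rho : 'I_K -> 'rV[R]_3) (eps : 'I_K -> 'I_M -> R),
    (forall l k, 0 <= al l k) /\ (forall l k, reg (rl l k)) /\
    cT (al l) (rl l) @[l --> \oo] --> I /\
    (forall k, al l k @[l --> \oo] --> alpha k) /\
    (forall k, rl l k @[l --> \oo] --> rho k) /\
    (forall k, 0 <= alpha k) /\ (forall k m, 0 <= eps k m) /\
    (forall k m, alpha k = eps k m * dmic (rho k) m) /\
    I = costE eps (fun k m => dmic (rho k) m).
Proof.
have [al [rl [alpha [rho [eps [al_ge0 [rlC [cT_cvg [al_cvg [rl_cvg e_cvg]]]]]]]]]] :=
  convergent_minimizing_sequence.
have d_cvg k m : dmic (rl l k) m @[l --> \oo] --> dmic (rho k) m.
  exact: continuous_cvg _ (enorm_continuous _) (cvgB (rl_cvg k) (cvg_cst (mic m))).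
exists al, rl, alpha, rho, eps; do 5!split => //.
split.
  move=> k; apply: (closed_cvg _ (@closed_ge R 0) _ _ (al_cvg k)).
  by apply: nearW => l; exact: al_ge0.
split.
  move=> k m; apply: (closed_cvg _ (@closed_ge R 0) _ _ (e_cvg k m)).
  by apply: nearW => l; rewrite /= divr_ge0 ?enorm_ge0.
split.
  move=> k m; have ratio_d : (fun l => al l k / dmic (rl l k) m * dmic (rl l k) m) = al^~ k.
    by apply/funext => l; rewrite divfK // gt_eqF // (dmic_gt0 _ m (rlC l k).2).
  have : al l k / dmic (rl l k) m * dmic (rl l k) m @[l --> \oo] --> eps k m * dmic (rho k) m.
    exact: cvgM.
  by rewrite ratio_d; move: (al_cvg k); exact: cvg_unique.
have : costE (fun k m => al l k / dmic (rl l k) m) (fun k m => dmic (rl l k) m)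
    @[l --> \oo] --> costE eps (fun k m => dmic (rho k) m).
  exact: (cvg_costE (fun l k m => al l k / dmic (rl l k) m) (fun l k m => dmic (rl l k) m)
    _ _ e_cvg d_cvg).
under eq_cvg do rewrite -costT_ratioE.
by move: cT_cvg; exact: cvg_unique.
Qed.

Local Notation off_mic rho := [pred k : 'I_K | [forall m, rho k != mic m]].

Lemma amplitude_eq0_at_mic {alpha : 'I_K -> R} {rho : 'I_K -> 'rV[R]_3}
    {eps : 'I_K -> 'I_M -> R} {k : 'I_K} :
  (forall k m, alpha k = eps k m * dmic (rho k) m) -> ~~ off_mic rho k -> alpha k = 0.
Proof.
move=> aed; rewrite inE negb_forall => /existsP[m]; rewrite negbK => /eqP rkm.
by rewrite (aed k m) rkm subrr enorm0 mulr0.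
Qed.

Lemma GammaE_regroup {alpha : 'I_K -> R} {rho : 'I_K -> 'rV[R]_3}
    {eps : 'I_K -> 'I_M -> R} m n :
  (forall k m, alpha k = eps k m * dmic (rho k) m) ->
  GammaE eps (fun k m => dmic (rho k) m) m n =
    \sum_(k | off_mic rho k) alpha k * gamma c fs kappa mic (rho k) m n +
    (\sum_(k | ~~ off_mic rho k) eps k m / (4 * pi)) * kappa (n%:R / fs).
Proof.
move=> aed; have pi4_neq0 : 4 * pi != 0 :> R by rewrite mulf_neq0 // gt_eqF // pi_gt0.
rewrite /GammaE (bigID (off_mic rho)) mulr_suml /=; congr (_ + _); apply: eq_bigr => k Pk.
  have d_neq0 : dmic (rho k) m != 0 by rewrite enorm_eq0 subr_eq0; exact: (forallP Pk m).
  rewrite /gamma /= (aed k m); move: (4 * pi) pi4_neq0 => q q_neq0.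
  by field; rewrite d_neq0 q_neq0.
have /esym/eqP := aed k m; rewrite (amplitude_eq0_at_mic aed Pk) mulf_eq0.
by case/orP => /eqP ->; rewrite ?mul0r ?subr0 //; move: (4 * pi) => q; ring.
Qed.

Lemma costE_regroup {alpha : 'I_K -> R} {rho : 'I_K -> 'rV[R]_3}
    {eps : 'I_K -> 'I_M -> R} (sigma : {perm 'I_K}) (le_PK : (#|off_mic rho| <= K)%N) :
  (forall k m, alpha k = eps k m * dmic (rho k) m) ->
  (forall k, off_mic rho (sigma k) = (k < #|off_mic rho|)%N) ->
  costE eps (fun k m => dmic (rho k) m) =
  costTt c fs kappa mic xs (fun k => alpha (sigma (widen_ord le_PK k)))
    (fun k => rho (sigma (widen_ord le_PK k)))
    (fun m => \sum_(k | ~~ off_mic rho k) eps k m / (4 * pi)).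
Proof.
move=> aed sigmaP; congr (_ * _); apply: eq_bigr => m _; apply: eq_bigr => n _.
by rewrite (GammaE_regroup _ _ aed) (sum_perm_pred_first _ _ le_PK _ sigmaP) opprD addrA.
Qed.

End source_localization.

Theorem lemma2 (R : realType) (c fs : R) (M N K : nat)
    (mic : 'I_M -> 'rV[R]_3) (xs : 'I_M -> 'I_N -> R) (kappa : R -> R) :
  0 < c -> 0 < fs -> (0 < M)%N -> (0 < N)%N -> (0 < K)%N ->
  continuous kappa -> 0 < kappa 0 ->
  kappa t @[t --> +oo%R] --> 0%R -> kappa t @[t --> -oo%R] --> 0%R ->
  amplitude_lower_bounded c fs kappa N K mic ->
  (exists r0, regionC c fs N mic r0) ->
  exists (K' : nat) (HK : (K' <= K)%N)
         (a : 'I_K' -> R) (r : 'I_K' -> 'rV[R]_3) (at_ : 'I_M -> R),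
    (forall k, 0 <= a k) /\ (forall k, ~ micset mic (r k)) /\
    (forall m, 0 <= at_ m) /\
    exists sigma : {perm 'I_K},
      infT c fs kappa K mic xs = costTt c fs kappa mic xs a r at_ /\
      exists (al : nat -> 'I_K -> R) (rl : nat -> 'I_K -> 'rV[R]_3),
        (forall l k, 0 <= al l k) /\
        (forall l k, regionC c fs N mic (rl l k)) /\
        costT c fs kappa mic xs (al l) (rl l) @[l --> \oo] --> infT c fs kappa K mic xs /\
        (forall k : 'I_K',
            al l (sigma (widen_ord HK k)) @[l --> \oo] --> a k /\
            rl l (sigma (widen_ord HK k)) @[l --> \oo] --> r k) /\
        (forall k : 'I_K, (K' <= k)%N -> al l (sigma k) @[l --> \oo] --> 0).
Proof.
move=> c_gt0 fs_gt0 M_gt0 N_gt0 _ kappa_cont kappa0_gt0 _ _ alb [r0 r0C].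
have [al [rl [alpha [rho [eps [al_ge0 [rlC [cT_cvg [al_cvg [rl_cvg
    [alpha_ge0 [eps_ge0 [aed infTE]]]]]]]]]]]]] :=
  minimizing_sequence_limits (xs := xs) c_gt0 fs_gt0 M_gt0 N_gt0 kappa_cont kappa0_gt0 alb r0C.
pose P := [pred k : 'I_K | [forall m, rho k != mic m]].
have [sigma sigmaP] := perm_pred_first _ P.
have le_PK : (#|P| <= K)%N by rewrite -[X in (_ <= X)%N]card_ord max_card.
exists #|P|, le_PK, (fun k => alpha (sigma (widen_ord le_PK k))),
  (fun k => rho (sigma (widen_ord le_PK k))),
  (fun m => \sum_(k | ~~ P k) eps k m / (4 * pi)).
split; first by move=> k; exact: alpha_ge0.
split.
  move=> k [m rkm]; have : P (sigma (widen_ord le_PK k)) by rewrite sigmaP; exact: ltn_ord k.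
  by move=> /forallP/(_ m); rewrite rkm eqxx.
split.
  by move=> m; apply: sumr_ge0 => k _; rewrite divr_ge0 ?eps_ge0 ?ltW ?mulr_gt0 ?pi_gt0.
exists sigma; split; first by rewrite infTE; exact: costE_regroup.
exists al, rl; do 3!split => //; split; first by move=> k; split.
move=> k; rewrite leqNgt -sigmaP => /(amplitude_eq0_at_mic aed) <-.
exact: al_cvg.
Qed.
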